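(* Let $P$ be a finite poset, $\epsilon\in\{1,-1\}$ and $\xi\in S^{(\epsilon)}$ such that $T^\xi$ is a generator of $\omega^{(\epsilon)}$ of degree $d>q^{(\epsilon)}\mathrm{dist}(-\infty,\infty)$. Define $\xi_1\in\mathbb Z^{P^-}$ by $\xi_1(z)=\xi(z)-1$ if $z=-\infty$ or if there exists $C\in C_\xi^{[d-\epsilon]}$ with $z=\max\{c\in C:\xi(c)>\epsilon\}$, and $\xi_1(z)=\xi(z)$ otherwise. Then $\xi_1\in S^{(\epsilon)}$ and $T^{\xi_1}$ is a generator of $\omega^{(\epsilon)}$ of degree $d-1$.
   Context: $P^\pm=P\cup\{-\infty,\infty\}$, $-\infty<z<\infty$ for $z\in P$; $P^-=P\cup\{-\infty\}$. Saturated chain: $x=z_0\lessdot\cdots\lessdot z_t=y$, length $t$; $q^{(\epsilon)}\mathrm{dist}(x,y)=\max\{\epsilon t:$ saturated chain of length $t$ from $x$ to $y$ in $P^\pm\}$. $\xi^+(B)=\sum_{b\in B}\xi(b)$. $S^{(m)}=\{\xi\in\mathbb Z^{P^-}:\xi(x)\ge m\ \forall x\in P,\ \xi(-\infty)\ge\xi^+(C)+m$ for every maximal chain $C$\}; $C_\xi^{[m]}$ = maximal chains $C$ of $P$ with $\xi^+(C)=m$. $R=\mathbb K[\mathcal C(P)]=\bigoplus_{S^{(0)}}\mathbb KT^\xi$ (Ehrhart ring of the chain polytope; $T^\xi=\prod_{x\in P^-}T_x^{\xi(x)}$, $\deg T^\xi=\xi(-\infty)$), $\omega^{(1)}=\omega=\bigoplus_{S^{(1)}}\mathbb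 KT^\xi$ canonical ideal, $\omega^{(-1)}=R:\omega=\bigoplus_{S^{(-1)}}\mathbb KT^\xi$. A generator of $\omega^{(\epsilon)}$ is a monomial $T^\xi$, $\xi\in S^{(\epsilon)}$, not of the form $T^{\xi_1}T^{\xi_2}$ with $\xi_1\in S^{(0)}$, $\xi_1(-\infty)>0$, $\xi_2\in S^{(\epsilon)}$. *)

From HB Require Import structures.
From mathcomp Require Import all_boot all_order all_algebra.
Set Implicit Arguments. Unset Strict Implicit. Unset Printing Implicit Defensive.
Import Order.TTheory GRing.Theory Num.Theory.

Section Chains.
Context {disp : Order.disp_t} {T : finPOrderType disp}.

Inductive ext := MInf | Elt of T | PInf.

Definition ext_lt (x y : ext) : bool :=
  match x, y with
  | MInf, MInf => false
  | MInf, _ => true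
  | Elt a, Elt b => (a < b)%O
  | Elt _, PInf => true
  | _, _ => false
  end.

(* covering relation x <. y in P^{+-}; any element strictly between two
   elements of P^{+-} necessarily lies in P *)
Definition ext_cov (x y : ext) : bool :=
  ext_lt x y && ~~ [exists z : T, ext_lt x (Elt z) && ext_lt (Elt z) y].

(* x = z_0 <. z_1 <. ... <. z_t = y with s = [:: z_1; ...; z_t], length t = size s *)
Definition sat_chain (x y : ext) (s : seq ext) : Prop :=
  path ext_cov x s /\ last x s = y /\ (0 < size s)%N.

Definition chainb (C : {set T}) : bool :=
  [forall x in C, forall y in C, (x <= y)%O || (y <= x)%O].

Definition maxchainb (C : {set T}) : bool :=
  chainb C && [forall D : {set T}, (chainb D && (C \subset D)) ==> (D == C)].

Local Open Scope ring_scope.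

(* xi in Z^{P^-}: xi None is the value at -oo *)
Definition xiplus (xi : option T -> int) (C : {set T}) : int :=
  \sum_(c in C) xi (Some c).

Definition inS (m : int) (xi : option T -> int) : Prop :=
  (forall x : T, m <= xi (Some x)) /\
  (forall C : {set T}, maxchainb C -> xiplus xi C + m <= xi None).

Definition degree (xi : option T -> int) : int := xi None.

Definition is_generator (eps : int) (xi : option T -> int) : Prop :=
  inS eps xi /\
  ~ (exists xi1 xi2 : option T -> int,
        [/\ inS 0 xi1, 0 < xi1 None, inS eps xi2 &
            forall z, xi z = xi1 z + xi2 z]).

Definition Cxi (xi : option T -> int) (m : int) (C : {set T}) : bool :=
  maxchainb C && (xiplus xi C == m).

Definition is_max_big (eps : int) (xi : option T -> int) (C : {set T}) (z : T) : bool :=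
  [&& z \in C, eps < xi (Some z) &
      [forall c in C, (eps < xi (Some c)) ==> (c <= z)%O]].

Definition xi_one (eps : int) (xi : option T -> int) (z : option T) : int :=
  match z with
  | None => xi None - 1
  | Some x =>
      if [exists C : {set T}, Cxi xi (degree xi - eps) C && is_max_big eps xi C x]
      then xi (Some x) - 1 else xi (Some x)
  end.

End Chains.
Arguments ext : clear implicits.
Arguments ext {disp} T.

From HB Require Import structures.
From mathcomp Require Import all_boot all_order all_algebra zify.
Import Order.TTheory GRing.Theory Num.Theory.
Set Implicit Arguments. Unset Strict Implicit.

(* Call a maximal chain C tight if
   xi^+(C) = d - eps, and call x marked if it is the top element of weight
   > eps on some tight chain; xi_one lowers xi at -oo and at marked elements.
   - Every tight chain carries a mark (tight_marked): a chain of weights all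
     equal to eps would give a saturated chain -oo <. ... <. +oo of
     eps-length d (maxchain_sat).  Hence xi_one is in S^(eps).
   - If T^xi_one = T^al T^be with T^al in R of positive degree, let minpos al
     be the antichain of minimal elements of the positive support of al.
     Every tight chain meets minpos al (tight_meets_minpos, which splices two
     tight chains at a least mark, using the strict bound minpos_strict), so
     T^xi = T^(minpos_ind al) T^(xi - minpos_ind al) factors, a contradiction.
   Nothing uses eps = 1 or eps = -1: the argument works for any integer eps. *)

Section Chains.
Context {disp : Order.disp_t} {T : finPOrderType disp}.
Implicit Types (C D : {set T}) (x y z : T).

(* The number of elements below x; it strictly increases along <, which
   lets us pick extremal elements with arg_minnP / arg_maxnP. *)
Definition rank x := #|[set y : T | (y < x)%O]|.

Lemma rank_lt x y : (x < y)%O -> (rank x < rank y)%N.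
Proof.
move=> lxy; apply: proper_card; apply/properP; split.
  by apply/subsetP => u; rewrite !inE => /lt_trans; apply.
by exists x; rewrite !inE ?ltxx.
Qed.

Lemma chainP C x y : chainb C -> x \in C -> y \in C -> (x <= y)%O || (y <= x)%O.
Proof. by move=> /forallP /(_ x) /implyP H /H /forallP /(_ y) /implyP H' /H'. Qed.

Lemma chainI C :
  (forall x y, x \in C -> y \in C -> (x <= y)%O || (y <= x)%O) -> chainb C.
Proof.
move=> cmp; apply/forallP => x; apply/implyP => xC.
by apply/forallP => y; apply/implyP; apply: cmp.
Qed.

Lemma maxchain_chain C : maxchainb C -> chainb C.
Proof. by case/andP. Qed.

Lemma maxchain_in C x : maxchainb C ->
  (forall c, c \in C -> (x <= c)%O || (c <= x)%O) -> x \in C.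
Proof.
case/andP => chC /forallP /(_ (x |: C)) /implyP maxC cmp.
suff /eqP <- : x |: C == C by rewrite setU11.
apply: maxC; rewrite subsetUr andbT; apply: chainI => u v.
rewrite !inE => /orP[/eqP->|uC] /orP[/eqP->|vC].
- by rewrite lexx.
- exact: cmp.
- by rewrite orbC cmp.
- exact: chainP chC uC vC.
Qed.

Lemma maxchainI C : chainb C ->
  (forall x, (forall c, c \in C -> (x <= c)%O || (c <= x)%O) -> x \in C) ->
  maxchainb C.
Proof.
move=> chC maxC; rewrite /maxchainb chC; apply/forall_inP => D /andP[chD sCD].
rewrite eqEsubset sCD andbT; apply/subsetP => x xD.
by apply: maxC => c cC; apply: chainP chD xD (subsetP sCD c cC).
Qed.

Lemma exists_maxchain C : chainb C -> exists2 D, maxchainb D & C \subset D.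
Proof.
move=> chC; have [D /maxsetP [chD maxD] sCD] := maxset_exists chC.
exists D => //; rewrite /maxchainb chD; apply/forall_inP => E /andP[chE sDE].
by rewrite (maxD E chE sDE).
Qed.

Lemma chain_min C (P : pred T) c0 : chainb C -> c0 \in C -> P c0 ->
  exists z, [/\ z \in C, P z & forall c, c \in C -> P c -> (z <= c)%O].
Proof.
move=> chC c0C Pc0; have Pc0' : [pred c | (c \in C) && P c] c0 by rewrite /= c0C.
case: (arg_minnP rank Pc0') => z /andP[zC Pz] zmin; exists z; split=> // c cC Pc.
case/orP: (chainP chC zC cC) => // cz; case: (eqVneq c z) => [->|ncz] //.
have := zmin c; rewrite /= cC Pc leqNgt => /(_ isT).
by rewrite rank_lt // lt_neqAle ncz.
Qed.

Lemma chain_max C (P : pred T) c0 : chainb C -> c0 \in C -> P c0 ->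
  exists z, [/\ z \in C, P z & forall c, c \in C -> P c -> (c <= z)%O].
Proof.
move=> chC c0C Pc0; have Pc0' : [pred c | (c \in C) && P c] c0 by rewrite /= c0C.
case: (arg_maxnP rank Pc0') => z /andP[zC Pz] zmax; exists z; split=> // c cC Pc.
case/orP: (chainP chC zC cC) => // zc; case: (eqVneq c z) => [->|ncz] //.
have := zmax c; rewrite /= cC Pc leqNgt => /(_ isT).
by rewrite rank_lt // lt_neqAle eq_sym ncz.
Qed.

Definition splice C1 C2 z : {set T} :=
  [set x in C1 | (x <= z)%O] :|: [set x in C2 | ~~ (x <= z)%O].

Lemma splice_maxchain C1 C2 z : maxchainb C1 -> maxchainb C2 ->
  z \in C1 -> z \in C2 -> maxchainb (splice C1 C2 z).
Proof.
move=> m1 m2 z1 z2; have [c1 c2] := (maxchain_chain m1, maxchain_chain m2).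
have above Ci x : chainb Ci -> z \in Ci -> x \in Ci -> ~~ (x <= z)%O -> (z <= x)%O.
  by move=> chCi zCi xCi; case/orP: (chainP chCi xCi zCi) => [->|].
apply: maxchainI.
  apply: chainI => u v; rewrite !inE.
  move=> /orP[/andP[uC uz]|/andP[uC uz]] /orP[/andP[vC vz]|/andP[vC vz]].
  - exact: chainP c1 uC vC.
  - by rewrite (le_trans uz (above _ _ c2 z2 vC vz)).
  - by rewrite (le_trans vz (above _ _ c2 z2 uC uz)) orbT.
  - exact: chainP c2 uC vC.
move=> x cmp; have zS : z \in splice C1 C2 z by rewrite !inE z1 lexx.
rewrite !inE; case: (boolP (x <= z)%O) => xz /=; rewrite ?andbT ?andbF ?orbF.
  apply: maxchain_in m1 _ => c cC; case: (boolP (c <= z)%O) => cz.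
    by apply: cmp; rewrite !inE cC cz.
  by rewrite (le_trans xz (above _ _ c1 z1 cC cz)).
apply: maxchain_in m2 _ => c cC; case: (boolP (c <= z)%O) => cz.
  by have := cmp z zS; rewrite (negbTE xz) => /(le_trans cz) ->; rewrite orbT.
by apply: cmp; rewrite !inE cC cz orbT.
Qed.

Lemma splice_sum (R : nmodType) (f : T -> R) C1 C2 z :
  (\sum_(x in splice C1 C2 z) f x =
   \sum_(x in C1 | (x <= z)%O) f x + \sum_(x in C2 | ~~ (x <= z)%O) f x)%R.
Proof.
rewrite (bigID (fun x => (x <= z)%O)) /=; congr (_ + _)%R; apply: eq_bigl => x;
  by rewrite !inE; case: (x <= z)%O; rewrite ?andbT ?andbF ?orbF.
Qed.

Lemma splice_swap_sum (R : nmodType) (f : T -> R) C1 C2 z :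
  (\sum_(x in splice C1 C2 z) f x + \sum_(x in splice C2 C1 z) f x =
   \sum_(x in C1) f x + \sum_(x in C2) f x)%R.
Proof.
rewrite !splice_sum (bigID (fun x => (x <= z)%O) (mem C1)).
rewrite (bigID (fun x => (x <= z)%O) (mem C2)) /=.
by rewrite addrACA [X in (_ + X)%R]addrC addrACA.
Qed.

End Chains.

Section Saturated.
Context {disp : Order.disp_t} {T : finPOrderType disp}.

Lemma ext_lt_trans : transitive (@ext_lt disp T).
Proof. by move=> [|b|] [|a|] [|c|] //=; apply: lt_trans. Qed.

Lemma ext_lt_irr (u : ext T) : ext_lt u u = false.
Proof. by case: u => //= a; rewrite ltxx. Qed.

Lemma sorted_gap (L : seq (ext T)) i j u : sorted ext_lt L -> (i.+1 < size L)%N ->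
  (j < size L)%N -> ext_lt (nth MInf L i) u -> ext_lt u (nth MInf L i.+1) ->
  ext_lt (nth MInf L j) u || ext_lt u (nth MInf L j).
Proof.
move=> sL iL jL ltu ugt; have lt_nth := sorted_ltn_nth ext_lt_trans MInf sL.
case: (ltnP i j) => [ij|ji]; apply/orP; [right|left].
  move: ij; rewrite leq_eqVlt => /orP[/eqP <- //|ij].
  by apply: ext_lt_trans ugt (lt_nth _ _ _ jL ij).
move: ji; rewrite leq_eqVlt => /orP[/eqP -> //|ji].
by apply: ext_lt_trans ltu; apply: lt_nth => //; apply: ltnW.
Qed.

Lemma maxchain_sat (C : {set T}) : maxchainb C ->
  exists2 s : seq (ext T), sat_chain MInf PInf s & size s = (#|C|).+1.
Proof.
move=> mC; have chC := maxchain_chain mC.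
set s0 := sort <=%O (enum C).
have s0le : sorted <=%O s0.
  apply: (sort_sorted_in (P := mem C)); last by apply/allP => x; rewrite mem_enum.
  by move=> x y xC yC; apply: chainP chC xC yC.
have s0lt : sorted <%O s0 by rewrite lt_sorted_uniq_le s0le sort_uniq enum_uniq.
set L := map Elt s0 ++ [:: PInf].
have inL c : c \in C -> exists2 j, (j < size (MInf :: L))%N & nth MInf (MInf :: L) j = Elt c.
  move=> cC; have cs : c \in s0 by rewrite mem_sort mem_enum.
  exists (index c s0).+1; first by rewrite /= /L size_cat size_map ltnS ltn_addr // index_mem.
  by rewrite /= /L nth_cat size_map index_mem cs (nth_map c) ?index_mem // nth_index.
have sL : sorted ext_lt (MInf :: L).
  rewrite /= /L cat_path /=; apply/andP; split.
    by case: (s0) s0lt => //= a r; rewrite path_map.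
  by case: (lastP s0) => [|r a] //=; rewrite map_rcons last_rcons.
exists L; last by rewrite /L size_cat size_map size_sort -cardE addn1.
split; last by rewrite /L cats1 last_rcons size_rcons.
apply/(pathP MInf) => i iL; have iL' : (i.+1 < size (MInf :: L))%N by [].
rewrite /ext_cov -[nth MInf L i]/(nth MInf (MInf :: L) i.+1).
rewrite (sorted_ltn_nth ext_lt_trans MInf sL) //=; last exact: ltnW.
apply/existsP => -[z /andP[ltz zgt]].
have gap c : c \in C -> ext_lt (Elt c) (Elt z) || ext_lt (Elt z) (Elt c).
  by case/inL => j jL <-; apply: sorted_gap sL iL' jL ltz zgt.
have zC : z \in C.
  by apply: maxchain_in mC _ => c /gap /orP[]/ltW ->; rewrite ?orbT.
by have := gap z zC; rewrite ext_lt_irr.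
Qed.

End Saturated.

Section Weights.
Context {disp : Order.disp_t} {T : finPOrderType disp}.
Implicit Types (C D E : {set T}) (al : option T -> int).
Local Open Scope ring_scope.

Lemma xiplus_subset al C D : (forall x, 0 <= al (Some x)) -> C \subset D ->
  xiplus al C <= xiplus al D.
Proof.
move=> al0 sCD; rewrite /xiplus [leLHS]big_mkcond [leRHS]big_mkcond /=.
apply: ler_sum => x _; case: ifP => [/(subsetP sCD) -> //|_]; by case: ifP.
Qed.

Definition minpos al : {set T} :=
  [set x | (0 < al (Some x)) && [forall y, (y < x)%O ==> (al (Some y) <= 0)]].

Lemma minpos_pos al (x : T) : x \in minpos al -> 0 < al (Some x).
Proof. by rewrite inE => /andP[]. Qed.

(* The exponent vector of the product of T_{-oo} and the T_x, x in minpos al. *)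
Definition minpos_ind al (z : option T) : int :=
  if z is Some x then (x \in minpos al)%:R else 1.

Lemma minpos_ind_ge0 al C : 0 <= xiplus (minpos_ind al) C.
Proof. by apply: sumr_ge0 => c _. Qed.

Lemma minpos_ind_meet al C a : a \in C -> a \in minpos al ->
  1 <= xiplus (minpos_ind al) C.
Proof.
move=> aC aA; rewrite /xiplus (bigD1 a) //= aA lerDl.
by apply: sumr_ge0 => c _.
Qed.

(* A chain meets the antichain minpos al at most once, so minpos_ind al is
   in S^(0), i.e. it is the exponent of a monomial of R of degree one. *)
Lemma minpos_ind_inS0 al : inS 0 (minpos_ind al).
Proof.
split=> // C /maxchain_chain chC; rewrite addr0 /=.
case: (boolP [exists a in C, a \in minpos al]); last first.
  by move=> /exists_inPn noA; rewrite /xiplus big1 // => c /noA /negbTE /= ->.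
move=> /exists_inP[a aC aA].
rewrite /xiplus (bigD1 a) //= aA big1 ?addr0 // => x /andP[xC xa] /=.
case xA: (x \in minpos al) => //; exfalso; move: aA xA; rewrite !inE.
move=> /andP[ap /forallP belowa] /andP[xp /forallP belowx].
case/orP: (chainP chC xC aC) => le.
  by move/implyP: (belowa x); rewrite lt_neqAle xa le leNgt xp => /(_ isT).
by move/implyP: (belowx a); rewrite lt_neqAle eq_sym xa le leNgt ap => /(_ isT).
Qed.

(* If al is in S^(0) with positive degree, a maximal chain missing minpos al
   is not tight for al: otherwise the least element c of positive weight on
   it lies above some y of positive weight, and the chain through y and the
   part of E above c would exceed the degree of al. *)
Lemma minpos_strict al E : inS 0 al -> 0 < al None -> maxchainb E ->
  (forall x, x \in E -> x \notin minpos al) -> xiplus al E < al None.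
Proof.
move=> [al0 alC] alpos mE noA; have chE := maxchain_chain mE.
have leE := alC E mE; rewrite addr0 in leE.
rewrite lt_neqAle leE andbT; apply/eqP => eqE.
have [c0 c0E c0p] : exists2 c, c \in E & 0 < al (Some c).
  apply/exists_inP; apply: contraTT alpos => /exists_inPn nopos.
  rewrite -leNgt -eqE /xiplus big1 // => c /nopos; rewrite -leNgt => le0.
  by apply/eqP; rewrite eq_le le0 al0.
have [c [cE cp cmin]] := chain_min (P := fun c => 0 < al (Some c)) chE c0E c0p.
have [y yc yp] : exists2 y, (y < c)%O & 0 < al (Some y).
  move: (noA c cE); rewrite inE cp negb_forall => /existsP[y].
  by rewrite negb_imply -ltNge => /andP[]; exists y.
have below x : x \in E -> ~~ (c <= x)%O -> al (Some x) = 0.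
  move=> xE; apply: contraNeq => ne0; apply: cmin xE _.
  by rewrite lt_def ne0 al0.
pose F := y |: [set x in E | (c <= x)%O].
have chF : chainb F.
  apply: chainI => u v; rewrite !inE.
  move=> /orP[/eqP->|/andP[uE cu]] /orP[/eqP->|/andP[vE cv]].
  - by rewrite lexx.
  - by rewrite (ltW (lt_le_trans yc cv)).
  - by rewrite (ltW (lt_le_trans yc cu)) orbT.
  - exact: chainP chE uE vE.
have [G mG sFG] := exists_maxchain chF.
have grow : al (Some y) + xiplus al E <= xiplus al G.
  apply: le_trans (xiplus_subset al0 sFG) => /=.
  rewrite /xiplus big_setU1 /=; last by rewrite inE negb_and (lt_geF yc) orbT.
  rewrite lerD2l (bigID (fun x => (c <= x)%O) (mem E)) /=.
  rewrite [X in _ + X]big1 => [|x /andP[]]; last exact: below.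
  by rewrite addr0 le_eqVlt; apply/orP; left; apply/eqP; apply: eq_bigl => x; rewrite inE.
by have := alC G mG; rewrite -eqE; lia.
Qed.

End Weights.

Section Generator.
Context {disp : Order.disp_t} {T : finPOrderType disp}.
Implicit Types (C D E : {set T}) (x y z : T).
Local Open Scope ring_scope.

Variables (eps : int) (xi : option T -> int).
Hypothesis xiS : inS eps xi.
Hypothesis far : forall s : seq (ext T), sat_chain MInf PInf s -> eps * (size s)%:Z < degree xi.

Local Notation d := (degree xi).
Local Notation eta := (xi_one eps xi).
Local Notation tight := (Cxi xi (d - eps)).

Definition marked x : bool := [exists C, tight C && is_max_big eps xi C x].

Definition marks C : int := \sum_(c in C) (marked c)%:R.

Lemma marks_ge0 C : 0 <= marks C.
Proof. by apply: sumr_ge0. Qed.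

Lemma xi_one_Some x : xi (Some x) = eta (Some x) + (marked x)%:R.
Proof. by rewrite /= -/(marked x); case: (marked x); rewrite ?subrK ?addr0. Qed.

Lemma xiplus_xi_one C : xiplus xi C = xiplus eta C + marks C.
Proof. by rewrite /xiplus -big_split; apply: eq_bigr => c _; apply: xi_one_Some. Qed.

(* Marked elements have weight > eps, so lowering them keeps xi_one >= eps. *)
Lemma marked_big x : marked x -> eps < xi (Some x).
Proof. by case/existsP => C /andP[_ /and3P[]]. Qed.

Lemma maxchain_le C : maxchainb C -> xiplus xi C <= d - eps.
Proof. by move=> /xiS.2; rewrite lerBrDr. Qed.

Lemma not_tight_lt C : maxchainb C -> ~~ tight C -> xiplus xi C < d - eps.
Proof. by move=> mC; rewrite /Cxi mC lt_neqAle maxchain_le // andbT. Qed.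

(* Every tight maximal chain carries a marked element: if all its weights
   were eps, the corresponding saturated chain would have eps * length = d,
   against the hypothesis d > q^(eps)dist(-oo, oo). *)
Lemma tight_marked C : tight C -> exists2 z, z \in C & marked z.
Proof.
case/andP => mC /eqP tC; have chC := maxchain_chain mC.
case: (boolP [exists c in C, eps < xi (Some c)]) => [|/exists_inPn flat].
  move=> /exists_inP[c0 c0C c0b].
  have [z [zC zb zmax]] := chain_max (P := fun c => eps < xi (Some c)) chC c0C c0b.
  exists z => //; apply/existsP; exists C; rewrite /Cxi mC tC eqxx /is_max_big zC zb.
  by apply/forall_inP => c cC; apply/implyP; apply: zmax.
have sumC : xiplus xi C = eps * #|C|%:Z.
  rewrite /xiplus (eq_bigr (fun _ => eps)) => [|c /flat]; last first.
    by rewrite -leNgt => le; apply/eqP; rewrite eq_le le xiS.1.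
  by rewrite sumr_const -mulr_natr natz mulrC.
have [s sat size_s] := maxchain_sat mC; have := far sat.
by rewrite size_s -addn1 PoszD mulrDr mulr1 -sumC tC subrK ltxx.
Qed.

Lemma xi_one_inS : inS eps eta.
Proof.
split=> [x|C mC].
  have := xi_one_Some x; have := xiS.1 x.
  by case: (boolP (marked x)) => [/marked_big|_] /=; lia.
rewrite [eta None]/= -/d; have := xiplus_xi_one C.
case: (boolP (tight C)) => [tC|/(not_tight_lt mC)]; last by have := marks_ge0 C; lia.
have [z zC zm] := tight_marked tC.
have : 1 <= marks C by rewrite /marks (bigD1 z) //= zm lerDl sumr_ge0.
by have := maxchain_le mC; lia.
Qed.

Section Decomposition.
Variables al be : option T -> int.
Hypothesis alS : inS 0 al.
Hypothesis al_pos : 0 < al None.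
Hypothesis beS : inS eps be.
Hypothesis eta_split : forall w, eta w = al w + be w.

Lemma minpos_big x : x \in minpos al -> eps < xi (Some x).
Proof.
move=> /minpos_pos alx; rewrite xi_one_Some eta_split.
by have := beS.1 x; case: (marked x) => /=; lia.
Qed.

Lemma avoid_bound E : maxchainb E -> (forall x, x \in E -> x \notin minpos al) ->
  xiplus xi E <= marks E + d - 2 - eps.
Proof.
move=> mE noA; have alE := minpos_strict alS al_pos mE noA.
have beE := beS.2 E mE; have := eta_split None; rewrite [eta None]/= -/d.
have etaE : xiplus eta E = xiplus al E + xiplus be E.
  by rewrite /xiplus -big_split; apply: eq_bigr => c _; apply: eta_split.
by rewrite xiplus_xi_one etaE; lia.
Qed.

(* The heart of the proof: every tight maximal chain C meets minpos al.
   Otherwise let z be the least marked element of C, top of the big elements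
   of a tight chain C2. Splicing C below z with C2 above z gives a maximal
   chain avoiding minpos al with at most one mark, hence of weight
   < d - eps; the opposite splice has weight <= d - eps, while the two
   splices together weigh as much as C and C2, i.e. 2(d - eps). *)
Lemma tight_meets_minpos C : tight C -> exists2 a, a \in C & a \in minpos al.
Proof.
move=> tC; apply/exists_inP; apply: contraT => /exists_inPn noA.
have [mC /eqP wC] := andP tC; have chC := maxchain_chain mC.
have [z0 z0C z0m] := tight_marked tC.
have [z [zC zm zmin]] := chain_min (P := marked) chC z0C z0m.
have /existsP[C2 /andP[/andP[mC2 /eqP wC2] /and3P[zC2 _ /forall_inP ztop]]] := zm.
have above x : x \in C2 -> ~~ (x <= z)%O -> xi (Some x) <= eps.
  by move=> xC2 xz; rewrite leNgt; apply: contra xz; apply/implyP; apply: ztop.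
have noA' x : x \in splice C C2 z -> x \notin minpos al.
  case/setUP; rewrite inE => /andP[xCi xz]; first exact: noA.
  by apply: contraL (above x xCi xz) => /minpos_big; rewrite -ltNge.
have mark1 : marks (splice C C2 z) <= 1.
  rewrite /marks (bigD1 z) ?inE ?zC ?lexx // big1 => [|c /andP[]].
    by case: (marked z).
  rewrite !inE => /orP[/andP[cC cz] ncz|/andP[cC2 cz] _].
    by case: (boolP (marked c)) => // cm; rewrite eq_le cz zmin in ncz.
  case: (boolP (marked c)) => // /marked_big; rewrite ltNge.
  by rewrite (above c cC2 cz).
have := avoid_bound (splice_maxchain mC mC2 zC zC2) noA'.
have := maxchain_le (splice_maxchain mC2 mC zC2 zC).
have := splice_swap_sum (fun x => xi (Some x)) C C2 z.
rewrite -!/(xiplus xi _) wC wC2; lia.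
Qed.

(* Hence xi - minpos_ind al is in S^(eps): tight chains lose one from
   minpos al, the others had room to spare. *)
Lemma shifted_inS : inS eps (fun w => xi w - minpos_ind al w).
Proof.
split=> [x|C mC] /=.
  case: (boolP (x \in minpos al)) => [/minpos_big|_] /=; last by rewrite subr0 xiS.1.
  by rewrite -[X in _ <= X - _]/(xi (Some x)) => ?; lia.
rewrite /xiplus sumrB -!/(xiplus _ C) -/d.
case: (boolP (tight C)) => [/tight_meets_minpos[a aC aA]|/(not_tight_lt mC)].
  by have := minpos_ind_meet aC aA; have := maxchain_le mC; lia.
by have := minpos_ind_ge0 al C; lia.
Qed.

End Decomposition.

(* Second half: a factorization of T^eta would lift to the factorization
   T^xi = T^(minpos_ind al) T^(xi - minpos_ind al). *)
Lemma xi_one_generator : ~ (exists xi1 xi2 : option T -> int,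
    [/\ inS 0 xi1, 0 < xi1 None, inS eps xi2 & forall w, xi w = xi1 w + xi2 w]) ->
  is_generator eps eta.
Proof.
move=> xi_gen; split; first exact: xi_one_inS.
case=> al [be [alS al_pos beS eta_split]]; apply: xi_gen.
exists (minpos_ind al), (fun w => xi w - minpos_ind al w); split=> //.
- exact: minpos_ind_inS0.
- exact: shifted_inS alS al_pos beS eta_split.
- by move=> w; rewrite addrC subrK.
Qed.

End Generator.

Unset Implicit Arguments.
Local Open Scope ring_scope.

Theorem mainTheorem15 (disp : Order.disp_t) (T : finPOrderType disp)
    (eps : int) (xi : option T -> int) (d : int) :
  (eps = 1 \/ eps = -1) ->
  is_generator eps xi ->
  degree xi = d ->
  (* d > q^(eps)dist(-oo, oo) = max { eps * t : saturated chain of length t } *)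
  (forall s : seq (ext T), sat_chain MInf PInf s -> eps * (size s)%:Z < d) ->
  inS eps (xi_one eps xi) /\ is_generator eps (xi_one eps xi) /\
  degree (xi_one eps xi) = d - 1.
Proof.
move=> _ [xiS xi_gen] <- far; split; first exact: xi_one_inS xiS far.
by split; first exact: xi_one_generator xiS far xi_gen.
Qed.
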